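(* Let $\Gamma_2$ be the mapping class group of a closed orientable surface of genus $2$, and let $U(2)\subset Sp(4,\mathbb R)$ be a maximal compact subgroup. Then the natural map $$Hom(\Gamma_2,U(2))\to Hom(\Gamma_2,Sp(4,\mathbb R))$$ induced by the inclusion is not surjective on path-components.
   Context: For a finitely generated group $\pi$ and a Lie group $G$, $Hom(\pi,G)$ is the space of homomorphisms $\pi\to G$, topologized as a subspace of $G^k$ via evaluation on a finite generating set; a map of spaces is surjective on path-components if every path-component of the target contains a point of the image. *)

From HB Require Import structures.
From mathcomp Require Import all_boot all_order all_algebra.
From mathcomp Require Import all_classical all_reals all_analysis.
Import numFieldNormedType.Exports.
Set Implicit Arguments. Unset Strict Implicit. Unset Printing Implicit Defensive.
Import Order.TTheory GRing.Theory Num.Theory.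
Local Open Scope ring_scope.
Local Open Scope classical_set_scope.

Section Defs.
Variable R : realType.

Definition Jmx : 'M[R]_4 := block_mx (0 : 'M[R]_(2,2)) 1%:M (- 1%:M) 0.

Definition Sp4 (A : 'M[R]_4) : Prop := A^T *m Jmx *m A = Jmx.

(* U(2) = Sp(4,R) ∩ O(4), the standard maximal compact subgroup of Sp(4,R)
   (image of A + iB |-> [[A,-B],[B,A]]). *)
Definition U2 (A : 'M[R]_4) : Prop := Sp4 A /\ A^T *m A = 1%:M.

Definition gen (r : 'I_5 -> 'M[R]_4) (k : nat) : 'M[R]_4 := r (inord k).

(* Hom(Gamma_2, G) where Gamma_2 is given by its (Birman--Hilden / Wajnryb)
   presentation with Dehn-twist generators a_1..a_5 (indexed 0..4 here):
   - a_i a_j = a_j a_i           for |i - j| >= 2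
   - a_i a_{i+1} a_i = a_{i+1} a_i a_{i+1}
   - (a_1 a_2 a_3 a_4 a_5)^6 = 1
   - I^2 = 1  where I = a_1 a_2 a_3 a_4 a_5 a_5 a_4 a_3 a_2 a_1
   - I commutes with every a_i  (I is the central hyperelliptic involution).
   A homomorphism is identified with the 5-tuple of images of the generators. *)
Definition is_hom_Gamma2 (G : 'M[R]_4 -> Prop) (r : 'I_5 -> 'M[R]_4) : Prop :=
  [/\ (forall i, G (r i)),
      (forall i j : 'I_5, (i.+1 < j)%N -> r i * r j = r j * r i),
      (forall i j : 'I_5, nat_of_ord j = (nat_of_ord i).+1 ->
          r i * r j * r i = r j * r i * r j),
      (gen r 0 * gen r 1 * gen r 2 * gen r 3 * gen r 4) ^+ 6 = 1 &
      let I := gen r 0 * gen r 1 * gen r 2 * gen r 3 * gen r 4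
               * gen r 4 * gen r 3 * gen r 2 * gen r 1 * gen r 0 in
      I ^+ 2 = 1 /\ (forall i, I * r i = r i * I)].

Definition same_path_component (S : ('I_5 -> 'M[R]_4) -> Prop)
    (x y : 'I_5 -> 'M[R]_4) : Prop :=
  exists g : R -> 'I_5 -> 'M[R]_4,
    [/\ g 0 = x, g 1 = y,
        (forall t : R, 0 <= t <= 1 -> S (g t)) &
        (forall (k : 'I_5) (i j : 'I_4),
            {within [set t : R | 0 <= t <= 1], continuous (fun t => g t k i j)})].

End Defs.

From HB Require Import structures.
From mathcomp Require Import all_boot all_order all_algebra.
From mathcomp Require Import all_classical all_reals all_analysis.
From mathcomp Require Import complex ring zify.
Import numFieldNormedType.Exports.
Import Order.TTheory GRing.Theory Num.Theory.
Local Open Scope ring_scope.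

(* Let c = a_1 a_2 a_3 a_4 a_5.  Since c^6 = 1, (1 + c^2 + c^4)/3 is the
   projection onto the fixed space of c^2, so tr (1 + c^2 + c^4) is a multiple
   of 3; being continuous, it is constant on path-components of Hom(Gamma_2, G).
   U(2) lies in the centralizer of J, a copy of M_2(C), where two elements
   commuting with a non-central one commute with each other.  With the braid
   and far-commutation relations this forces a_1 = ... = a_5 =: M, so c = M^5
   and the hyperelliptic involution is M^10; then M^30 = M^20 = 1 gives
   c^2 = 1 and the trace is 12.  For the action of Gamma_2 on H_1(S_2; Z)
   one finds 1 + c^2 + c^4 = 0, so the trace is 0. *)

(* Explicit integer matrices as lists, so that identities between them can be
   decided by vm_compute (MathComp matrices are locked). *)
Definition intmx := seq (seq int).

Definition imx_get (a : intmx) (i j : nat) : int := nth 0 (nth [::] a i) j.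

Definition imx_build n (f : nat -> nat -> int) : intmx :=
  [seq [seq f i j | j <- iota 0 n] | i <- iota 0 n].

Definition imx_zero n : intmx := imx_build n (fun _ _ => 0).
Definition imx_id n : intmx := imx_build n (fun i j => (i == j)%:Z).
Definition imx_add n (a b : intmx) : intmx :=
  imx_build n (fun i j => imx_get a i j + imx_get b i j).
Definition imx_tr n (a : intmx) : intmx := imx_build n (fun i j => imx_get a j i).
Definition imx_mul n (a b : intmx) : intmx :=
  imx_build n (fun i j =>
    foldr (fun k s => imx_get a i k * imx_get b k j + s) 0 (index_iota 0 n)).

Lemma imx_get_build n f (i j : 'I_n) : imx_get (imx_build n f) i j = f i j.
Proof.
by rewrite /imx_get !(nth_map 0%N) ?size_iota ?ltn_ord // !nth_iota ?ltn_ord.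
Qed.

Section IntMatrixModel.
Variables (R : nzRingType) (n : nat).

Definition mx_of_int (a : intmx) : 'M[R]_n := \matrix_(i, j) (imx_get a i j)%:~R.

Lemma mx_of_int_zero : mx_of_int (imx_zero n) = 0.
Proof. by apply/matrixP => i j; rewrite !mxE imx_get_build. Qed.

Lemma mx_of_int_id : mx_of_int (imx_id n) = 1.
Proof. by apply/matrixP => i j; rewrite !mxE imx_get_build -(inj_eq val_inj). Qed.

Lemma mx_of_int_add a b : mx_of_int (imx_add n a b) = mx_of_int a + mx_of_int b.
Proof. by apply/matrixP => i j; rewrite !mxE imx_get_build rmorphD. Qed.

Lemma mx_of_int_tr a : mx_of_int (imx_tr n a) = (mx_of_int a)^T.
Proof. by apply/matrixP => i j; rewrite !mxE imx_get_build. Qed.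

Lemma mx_of_int_mul a b : mx_of_int (imx_mul n a b) = mx_of_int a * mx_of_int b.
Proof.
rewrite -mulmxE; apply/matrixP => i j; rewrite !mxE imx_get_build -foldr_map foldrE big_map.
rewrite big_mkord rmorph_sum.
by apply: eq_bigr => k _; rewrite !mxE rmorphM.
Qed.

End IntMatrixModel.

Lemma mxtrace_idem (F : fieldType) n (P : 'M[F]_n) :
  P *m P = P -> \tr P = (\rank P)%:R.
Proof.
move=> PP; have := mulmx_base P; have := row_base_free P; have := col_base_full P.
move: (col_base P) (row_base P) => L U fullL freeU defP.
have UL : U *m L = 1%:M.
  apply: (row_free_inj freeU); rewrite mul1mx; apply: (row_full_inj fullL).
  by rewrite !mulmxA defP -mulmxA defP PP.
by rewrite -{1}defP mxtrace_mulC UL mxtrace1.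
Qed.

(* (1 + Y + Y^2)/3 is the projection onto the fixed space of Y. *)
Lemma mxtrace_cube_root_sum (F : fieldType) n (Y : 'M[F]_n) :
  3%:R != 0 :> F -> Y ^+ 3 = 1 -> exists k, \tr (1 + Y + Y ^+ 2) = (3 * k)%:R.
Proof.
move=> three_neq0 Y3; set Q := 1 + Y + Y ^+ 2.
have QY : Q * Y = Q by rewrite !mulrDl mul1r -!exprSr Y3 addrC addrA.
have QQ : Q * Q = Q *+ 3.
  by rewrite {2}/Q !mulrDr mulr1 QY expr2 mulrA !QY !mulrS mulr0n addr0 addrA.
set P := 3%:R^-1 *: Q.
have PP : P *m P = P.
  by rewrite -scalemxAl -scalemxAr mulmxE QQ -scaler_nat !scalerA -mulrA mulVf ?mulr1.
exists (\rank P); rewrite natrM -mxtrace_idem // -mxtraceZ /P scalerA.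
by rewrite divff // scale1r.
Qed.

Lemma ord2E (i : 'I_2) : i = ord0 \/ i = ord_max.
Proof. by case: i => -[|[|]] // ?; [left | right]; apply: val_inj. Qed.

Lemma sum_ord2 (V : nmodType) (f : 'I_2 -> V) : \sum_i f i = f ord0 + f ord_max.
Proof. by rewrite big_ord_recl big_ord1; congr (_ + f _); apply: val_inj. Qed.

Section TwoByTwo.
Context {F : fieldType}.

Lemma proportional3 {b c e q r f : F} : [|| b != 0, c != 0 | e != 0] ->
  b * r = q * c -> b * f = q * e -> c * f = r * e ->
  exists l, [/\ q = l * b, r = l * c & f = l * e].
Proof.
have ratio (x y u v : F) : x != 0 -> x * v = y * u -> v = y / x * u.
  by move=> x0 xv; rewrite -[v](mulKf x0) xv mulrA [x^-1 * y]mulrC.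
case/or3P=> [b0|c0|e0] brqc bfqe cfre.
- by exists (q / b); split; [rewrite divfK | apply: ratio | apply: ratio].
- exists (r / c); split; [apply: ratio => // | by rewrite divfK | exact: ratio].
  by rewrite [LHS]mulrC -brqc mulrC.
- exists (f / e); split; [apply: ratio => // | apply: ratio => // | by rewrite divfK].
  by rewrite [LHS]mulrC -bfqe mulrC.
  by rewrite [LHS]mulrC -cfre mulrC.
Qed.

Local Notation i0 := (ord0 : 'I_2).
Local Notation i1 := (ord_max : 'I_2).

Lemma mx2_centralizer {A Z : 'M[F]_(2)} : A *m Z = Z *m A ->
  (exists x, Z = x%:M) \/ exists l m, A = l *: Z + m%:M.
Proof.
move=> AZ; have e i j : (A *m Z) i j = (Z *m A) i j by rewrite AZ.
move: (e i0 i0) (e i0 i1) (e i1 i0); rewrite !mxE !sum_ord2.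
set p := A i0 i0; set q := A i0 i1; set r := A i1 i0; set s := A i1 i1.
set a := Z i0 i0; set b := Z i0 i1; set c := Z i1 i0; set d := Z i1 i1.
move=> e00 e01 e10.
(* AZ = ZA says that (q, r, p - s) is proportional to (b, c, a - d). *)
have br_qc : b * r = q * c.
  by apply/subr0_eq; rewrite -(subrr (a * p + b * r)) -{2}e00; ring.
have bps_qad : b * (p - s) = q * (a - d).
  by apply/subr0_eq; rewrite -(subrr (a * q + b * s)) -{1}e01; ring.
have cps_rad : c * (p - s) = r * (a - d).
  by apply/subr0_eq; rewrite -(subrr (c * p + d * r)) -{2}e10; ring.
have [nonscalar|] := boolP [|| b != 0, c != 0 | a - d != 0]; last first.
  rewrite !negb_or !negbK subr_eq0 => /and3P[/eqP b0 /eqP c0 /eqP ad].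
  left; exists a; apply/matrixP => i j.
  by case: (ord2E i) => ->; case: (ord2E j) => ->; rewrite !mxE.
right; have [l [ql rl psl]] := proportional3 nonscalar br_qc bps_qad cps_rad.
exists l, (s - l * d); apply/matrixP => i j.
case: (ord2E i) => ->; case: (ord2E j) => ->; rewrite !mxE /= -/a -/b -/c -/d -/p -/q -/r -/s
  ?mulr1n ?mulr0n ?addr0 //.
  by rewrite -[p](subrK s) psl; ring.
by ring.
Qed.

Lemma mx2_commute_or_scalar {A B Z : 'M[F]_(2)} :
  A *m Z = Z *m A -> B *m Z = Z *m B ->
  (exists x, Z = x%:M) \/ A *m B = B *m A.
Proof.
move=> AZ BZ; have [|[l [m ->]]] := mx2_centralizer AZ; first by left.
by right; rewrite mulmxDl mulmxDr -scalemxAl -scalemxAr BZ mul_scalar_mx mul_mx_scalar.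
Qed.
End TwoByTwo.

Lemma braid_comm_eq (R : unitRingType) (x y : R) :
  x \is a GRing.unit -> y \is a GRing.unit ->
  GRing.comm x y -> x * y * x = y * x * y -> x = y.
Proof.
move=> ux uy xy braid; apply: (mulIr uy); apply: (mulrI ux).
by rewrite xy mulrA braid -xy -mulrA.
Qed.

Section BraidChain.
Context {R : unitRingType} (S : R -> Prop).

Definition centralizes (z : R) := forall w, S w -> GRing.comm z w.

Hypothesis S_commute_or_central : forall x y z, S x -> S y -> S z ->
  GRing.comm x z -> GRing.comm y z -> centralizes z \/ GRing.comm x y.

Variables (n : nat) (a : nat -> R).
Hypothesis n_ge5 : (5 <= n)%N.
Hypothesis a_S : forall i, (i < n)%N -> S (a i).
Hypothesis a_unit : forall i, (i < n)%N -> a i \is a GRing.unit.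
Hypothesis a_far : forall i j, (i.+1 < j < n)%N -> GRing.comm (a i) (a j).
Hypothesis a_braid : forall i, (i.+1 < n)%N -> a i * a i.+1 * a i = a i.+1 * a i * a i.+1.

Lemma central_braid_eq i j : (i < n)%N -> (j < n)%N -> centralizes (a i) ->
  a i * a j * a i = a j * a i * a j -> a j = a i.
Proof.
move=> ilt jlt ci bij; apply/esym/braid_comm_eq; rewrite ?a_unit //.
by apply: ci; exact: a_S.
Qed.

Lemma central_chain_const k : (k < n)%N -> centralizes (a k) ->
  forall j, (j < n)%N -> a j = a k.
Proof.
move=> klt ck.
have up d : (k + d < n)%N -> a (k + d) = a k.
  elim: d => [|d IHd]; first by rewrite addn0.
  rewrite addnS => lt; have IH := IHd (ltnW lt).
  have ckd : centralizes (a (k + d)) by rewrite IH.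
  by rewrite -IH; apply: central_braid_eq ckd _; [lia | lia | exact: a_braid].
have down d : (d <= k)%N -> a (k - d)%N = a k.
  elim: d => [|d IHd] le; first by rewrite subn0.
  have IH := IHd (ltnW le).
  have ckd : centralizes (a (k - d)) by rewrite IH.
  rewrite -IH; apply: central_braid_eq ckd _; [lia | lia |].
  have -> : (k - d = (k - d.+1).+1)%N by lia.
  by apply/esym/a_braid; lia.
move=> j jlt; case: (leqP k j) => [kj|jk].
  by rewrite -(subnKC kj) up ?subnKC.
by rewrite -(subKn (ltnW jk)) down ?leq_subr.
Qed.

Lemma braid_chain_adjacent_eq i : (i.+1 < n)%N -> a i = a i.+1.
Proof.
(* a k is far from both a i and a i.+1; such a k exists because 5 <= n. *)
move=> lt; pose k := (if i + 3 < n then i + 3 else i - 2)%N.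
have klt : (k < n)%N by rewrite /k; case: ifP; lia.
have far j : (j <= i.+1)%N -> (i <= j)%N -> GRing.comm (a j) (a k).
  move=> ji ij; rewrite /k; case: ifP => h; first by apply: a_far; lia.
  by apply/esym/a_far; lia.
have [ck|] := S_commute_or_central _ _ _ (a_S _ (ltnW lt)) (a_S _ lt) (a_S _ klt)
  (far i (leqnSn _) (leqnn _)) (far i.+1 (leqnn _) (leqnSn _)).
  have eqk := central_chain_const _ klt ck.
  by rewrite (eqk i) ?(eqk i.+1) //; lia.
by move=> comm_i; apply: braid_comm_eq => //; [apply: a_unit; lia | exact: a_unit | exact: a_braid].
Qed.

Lemma braid_chain_const i : (i < n)%N -> a i = a 0.
Proof.
elim: i => // i IHi lt; rewrite -IHi ?(ltnW lt) //.
by apply/esym/braid_chain_adjacent_eq.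
Qed.

End BraidChain.

Section EntrywiseContinuity.
Context {K : numFieldType} {T : topologicalType}.

Definition mx_continuous {m n} (M : T -> 'M[K]_(m, n)) :=
  forall i j, continuous (fun t => M t i j).

Lemma mx_continuous_cst {m n} (A : 'M[K]_(m, n)) : mx_continuous (fun=> A).
Proof. by move=> i j; exact: cst_continuous. Qed.

Lemma mx_continuousD {m n} {M N : T -> 'M[K]_(m, n)} :
  mx_continuous M -> mx_continuous N -> mx_continuous (fun t => M t + N t).
Proof.
move=> cM cN i j; under eq_fun do rewrite mxE.
by move=> t; apply: continuousD; [exact: cM | exact: cN].
Qed.

Lemma mx_continuousM {m n p} {M : T -> 'M[K]_(m, n)} {N : T -> 'M[K]_(n, p)} :
  mx_continuous M -> mx_continuous N -> mx_continuous (fun t => M t *m N t).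
Proof.
move=> cM cN i j; under eq_fun do rewrite mxE.
apply: continuous_big => [|k _]; first exact: add_continuous.
by move=> t; apply: continuousM; [exact: cM | exact: cN].
Qed.

Lemma mx_continuous_mul {n} {M N : T -> 'M[K]_(n)} :
  mx_continuous M -> mx_continuous N -> mx_continuous (fun t => M t * N t).
Proof. exact: mx_continuousM. Qed.

Lemma mx_continuousX {n} {M : T -> 'M[K]_(n)} k :
  mx_continuous M -> mx_continuous (fun t => M t ^+ k).
Proof.
move=> cM; elim: k => [|k IHk]; first exact: mx_continuous_cst.
under [X in mx_continuous X]eq_fun do rewrite exprS.
exact: mx_continuous_mul.
Qed.

Lemma continuous_mxtrace {n} {M : T -> 'M[K]_(n)} :
  mx_continuous M -> continuous (fun t => \tr (M t)).
Proof.
move=> cM; apply: continuous_big => [|k _]; [exact: add_continuous | exact: cM].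
Qed.

End EntrywiseContinuity.

Lemma continuous_natmul_eq0 (R : realType) (f : R -> R) (d : nat) : (1 < d)%N ->
  {within [set t : R | 0 <= t <= 1], continuous f}%classic ->
  (forall t, t \in `[0, 1] -> exists k, f t = (d * k)%:R) ->
  f 1 = 0 -> f 0 = 0.
Proof.
move=> d_gt1 cf f_nat f1.
have zero_in : (0 : R) \in `[0, 1] by rewrite bound_itvE ler01.
have [[|k] f0] := f_nat 0 zero_in.
  by rewrite f0 muln0.
have : Num.min (f 0) (f 1) <= 1 <= Num.max (f 0) (f 1).
  by rewrite f0 f1 ge_min le_max ler01 orbT ler1n muln_gt0 (ltnW d_gt1).
rewrite -set_itvcc in cf; case/(IVT ler01 cf) => c c01 fc1.
have [m fm] := f_nat c c01; move/eqP: fc1; rewrite fm -[1]/(1%:R) eqr_nat.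
by rewrite muln_eq1 => /andP[/eqP d1]; rewrite d1 in d_gt1.
Qed.

Section ComplexStructure.
Variable R : realType.
Local Open Scope complex_scope.

Local Notation ul X := (@ulsubmx R 2 2 2 2 X).
Local Notation ur X := (@ursubmx R 2 2 2 2 X).

Definition Jcomm (X : 'M[R]_4) : Prop := GRing.comm X (Jmx R).

Lemma Jcomm_block X : Jcomm X -> X = block_mx (ul X) (ur X) (- ur X) (ul X).
Proof.
have blockX : X = block_mx (ul X) (ur X) (@dlsubmx R 2 2 2 2 X) (@drsubmx R 2 2 2 2 X).
  by rewrite submxK.
rewrite /Jcomm /GRing.comm -mulmxE /Jmx {1 2}blockX !(@mulmx_block _ 2 2 2 2 2 2).
move/(@eq_block_mx _ 2 2 2 2) => [+ + _ _].
rewrite !mulmx0 !mul0mx !mulmxN !mulmx1 !mul1mx !add0r !addr0.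
by move=> dlE drE; rewrite {1}blockX -dlE -drE.
Qed.

Lemma Jcomm_mul X Y : Jcomm X -> Jcomm Y -> Jcomm (X * Y).
Proof. by move=> JX JY; rewrite /Jcomm /GRing.comm -mulrA JY !mulrA JX. Qed.

(* X = [[P, Q], [-Q, P]] corresponds to the complex matrix P - iQ. *)
Definition cplx_of (X : 'M[R]_4) : 'M[R[i]]_2 :=
  \matrix_(i, j) (ul X i j +i* - ur X i j).

Lemma cplx_of_inj X Y : Jcomm X -> Jcomm Y -> cplx_of X = cplx_of Y -> X = Y.
Proof.
move=> /Jcomm_block eX /Jcomm_block eY /matrixP XY.
have ulXY : ul X = ul Y by apply/matrixP => i j; move: (XY i j); rewrite !mxE => -[].
have urXY : ur X = ur Y.
  by apply/matrixP => i j; move: (XY i j); rewrite !mxE => -[_ /oppr_inj].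
by rewrite eX eY ulXY urXY.
Qed.

Lemma cplx_ofM X Y : Jcomm X -> Jcomm Y -> cplx_of (X * Y) = cplx_of X * cplx_of Y.
Proof.
move=> /Jcomm_block eX /Jcomm_block eY.
have ulXY : ul (X * Y) = ul X *m ul Y - ur X *m ur Y.
  by rewrite -mulmxE {1}eX {1}eY (@mulmx_block _ 2 2 2 2 2 2) block_mxKul mulmxN.
have urXY : ur (X * Y) = ul X *m ur Y + ur X *m ul Y.
  by rewrite -mulmxE {1}eX {1}eY (@mulmx_block _ 2 2 2 2 2 2) block_mxKur.
have mulc (a b c d : R) : (a +i* b) * (c +i* d) = (a * c - b * d) +i* (a * d + b * c).
  by [].
have addc (a b c d : R) : (a +i* b) + (c +i* d) = (a + c) +i* (b + d) by [].
apply/matrixP => i j; rewrite -mulmxE /cplx_of ulXY urXY !mxE !sum_ord2 !mxE.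
by rewrite !mulc addc; congr Complex; ring.
Qed.

Lemma Jcomm_commute_or_central X Y Z : Jcomm X -> Jcomm Y -> Jcomm Z ->
  GRing.comm X Z -> GRing.comm Y Z -> centralizes Jcomm Z \/ GRing.comm X Y.
Proof.
move=> JX JY JZ XZ YZ.
have cplx_comm A B : Jcomm A -> Jcomm B -> GRing.comm A B ->
    cplx_of A *m cplx_of B = cplx_of B *m cplx_of A.
  by move=> JA JB AB; rewrite !mulmxE -!cplx_ofM // AB.
have lift_comm A B : Jcomm A -> Jcomm B ->
    cplx_of A *m cplx_of B = cplx_of B *m cplx_of A -> GRing.comm A B.
  by move=> JA JB; rewrite !mulmxE -!cplx_ofM // => /cplx_of_inj; apply; apply: Jcomm_mul.
case: (mx2_commute_or_scalar (cplx_comm _ _ JX JZ XZ) (cplx_comm _ _ JY JZ YZ)).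
  by case=> z Zz; left => W JW; apply: lift_comm => //; rewrite Zz scalar_mxC.
by move=> XY; right; apply: lift_comm.
Qed.

Lemma U2_Jcomm (X : 'M[R]_4) : U2 X -> Jcomm X.
Proof.
case; rewrite /Sp4 /Jcomm /GRing.comm -!mulmxE => sympl orth.
by rewrite -[in LHS]sympl !mulmxA (mulmx1C orth) mul1mx.
Qed.

Lemma U2_unit (X : 'M[R]_4) : U2 X -> X \is a GRing.unit.
Proof. by case=> _ /mulmx1_unit[]. Qed.

End ComplexStructure.

Section Gamma2Representations.
Context {R : realType}.
Implicit Types (G : 'M[R]_4 -> Prop) (r : 'I_5 -> 'M[R]_4).

Definition coxeter r : 'M[R]_4 := gen r 0 * gen r 1 * gen r 2 * gen r 3 * gen r 4.

Definition fix_trace r : R := \tr (1 + coxeter r ^+ 2 + coxeter r ^+ 4).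

Lemma fix_trace_natmul3 G r : is_hom_Gamma2 G r -> exists k, fix_trace r = (3 * k)%:R.
Proof.
case=> _ _ _ cox6 _; rewrite /fix_trace -[4%N]/(2 * 2)%N exprM.
by apply: mxtrace_cube_root_sum; [rewrite pnatr_eq0 | rewrite -exprM].
Qed.

Lemma fix_trace_path_eq0 G (g : R -> 'I_5 -> 'M[R]_4) :
  (forall t, 0 <= t <= 1 -> is_hom_Gamma2 G (g t)) ->
  (forall k i j, {within [set t : R | 0 <= t <= 1], continuous (fun t => g t k i j)}%classic) ->
  fix_trace (g 1) = 0 -> fix_trace (g 0) = 0.
Proof.
move=> g_hom g_cont.
apply: (@continuous_natmul_eq0 _ (fun t => fix_trace (g t)) 3) => //; last first.
  by move=> t; rewrite in_itv /= => t01; apply: fix_trace_natmul3 (g_hom t t01).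
apply: continuous_mxtrace.
have gen_cont k : mx_continuous (fun t : subspace [set t : R | 0 <= t <= 1] => gen (g t) k).
  by move=> i j; apply: g_cont.
have cox_cont : mx_continuous (fun t : subspace [set t : R | 0 <= t <= 1] => coxeter (g t)).
  rewrite /coxeter; do 4 (apply: mx_continuous_mul; last exact: gen_cont).
  exact: gen_cont.
exact: (mx_continuousD (mx_continuousD (mx_continuous_cst 1) (mx_continuousX 2 cox_cont))
  (mx_continuousX 4 cox_cont)).
Qed.

Section HomRelations.
Context {G : 'M[R]_4 -> Prop} {r : 'I_5 -> 'M[R]_4}.
Hypothesis r_hom : is_hom_Gamma2 G r.

Lemma hom_gen_in i : (i < 5)%N -> G (gen r i).
Proof. by case: r_hom => G_r _ _ _ _ _; apply: G_r. Qed.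

Lemma hom_gen_far i j : (i.+1 < j < 5)%N -> GRing.comm (gen r i) (gen r j).
Proof.
case: r_hom => _ far _ _ _ /andP[ij j5]; apply: far.
by rewrite !inordK // (ltn_trans _ (ltn_trans ij j5)).
Qed.

Lemma hom_gen_braid i : (i.+1 < 5)%N ->
  gen r i * gen r i.+1 * gen r i = gen r i.+1 * gen r i * gen r i.+1.
Proof. by case: r_hom => _ _ braid _ _ i5; apply: braid; rewrite !inordK // ltnW. Qed.

End HomRelations.

Lemma U2_hom_gen_const r :
  is_hom_Gamma2 (@U2 R) r -> forall i, (i < 5)%N -> gen r i = gen r 0.
Proof.
move=> r_hom; apply: (@braid_chain_const _ _ (@Jcomm_commute_or_central R) 5 (gen r)) => //.
- by move=> i /(hom_gen_in r_hom)/U2_Jcomm.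
- by move=> i /(hom_gen_in r_hom)/U2_unit.
- exact: hom_gen_far r_hom.
- exact: hom_gen_braid r_hom.
Qed.

Lemma U2_hom_coxeter_sq r : is_hom_Gamma2 (@U2 R) r -> coxeter r ^+ 2 = 1.
Proof.
move=> r_hom; have [_ _ _ + [+ _]] := r_hom.
rewrite /coxeter !(U2_hom_gen_const _ r_hom) //; set M := gen r 0.
have pow5 : M * M * M * M * M = M ^+ 5 by rewrite !exprS expr0 mulr1 !mulrA.
have pow10 : M * M * M * M * M * M * M * M * M * M = M ^+ 10.
  by rewrite !exprS expr0 mulr1 !mulrA.
rewrite pow10 pow5 => M30 M20; rewrite -!exprM in M30 M20 *.
by rewrite -[LHS]mul1r -{1}M20 -exprD; exact: M30.
Qed.

Lemma fix_trace_U2 r : is_hom_Gamma2 (@U2 R) r -> fix_trace r = 12%:R.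
Proof.
move=> r_hom; rewrite /fix_trace -[4%N]/(2 * 2)%N exprM U2_hom_coxeter_sq // expr1n.
by rewrite !mxtraceD mxtrace1 -!natrD.
Qed.

End Gamma2Representations.

Definition imx_J : intmx :=
  [:: [:: 0; 0; 1; 0]; [:: 0; 0; 0; 1]; [:: -1; 0; 0; 0]; [:: 0; -1; 0; 0]].

Lemma mx_of_int_J (R : realType) : mx_of_int R 4 imx_J = Jmx R.
Proof.
apply/matrixP => i j; rewrite /Jmx !mxE.
case: splitP => -[[|[|?]] ?] //= ->; rewrite ?mxE;
  case: splitP => -[[|[|?]] ?] //= ->; rewrite ?mxE /= ?oppr0 //.
Qed.

(* The action of the Dehn twists a_1, ..., a_5 on H_1(S_2; Z) = Z^4 in a
   symplectic basis: each a_k acts by a symplectic transvection. *)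
Definition imx_twists : seq intmx :=
 [:: [:: [:: 1; 0; -1; 0]; [:: 0; 1; 0; 0]; [:: 0; 0; 1; 0]; [:: 0; 0; 0; 1]];
     [:: [:: 1; 0; 0; 0]; [:: 0; 1; 0; 0]; [:: 1; 0; 1; 0]; [:: 0; 0; 0; 1]];
     [:: [:: 1; 0; -1; 1]; [:: 0; 1; 1; -1]; [:: 0; 0; 1; 0]; [:: 0; 0; 0; 1]];
     [:: [:: 1; 0; 0; 0]; [:: 0; 1; 0; 0]; [:: 0; 0; 1; 0]; [:: 0; 1; 0; 1]];
     [:: [:: 1; 0; 0; 0]; [:: 0; 1; 0; -1]; [:: 0; 0; 1; 0]; [:: 0; 0; 0; 1]]].

Section HomologyRepresentation.
Variable R : realType.

Definition homology_rep (k : 'I_5) : 'M[R]_4 := mx_of_int R 4 (nth [::] imx_twists k).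

Lemma homology_rep_hom : is_hom_Gamma2 (@Sp4 R) homology_rep.
Proof.
split.
- move=> k; rewrite /Sp4 /homology_rep -mx_of_int_J -mx_of_int_tr !mulmxE -!mx_of_int_mul.
  by case: k => [[|[|[|[|[|?]]]]] ?] //=; congr mx_of_int; vm_compute.
- move=> [[|[|[|[|[|?]]]]] ?] [[|[|[|[|[|?]]]]] ?] //= _; rewrite /homology_rep -!mx_of_int_mul;
  by congr mx_of_int; vm_compute.
- move=> [[|[|[|[|[|?]]]]] ?] [[|[|[|[|[|?]]]]] ?] //= _; rewrite /homology_rep -!mx_of_int_mul;
  by congr mx_of_int; vm_compute.
- rewrite /gen /homology_rep !inordK // !exprS expr0 mulr1 -!mx_of_int_mul -mx_of_int_id.
  by congr mx_of_int; vm_compute.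
- rewrite /gen /homology_rep !inordK //.
  split; last move=> [[|[|[|[|[|?]]]]] ?] //=.
  all: rewrite ?expr2 -!mx_of_int_mul -?mx_of_int_id; by congr mx_of_int; vm_compute.
Qed.

Lemma fix_trace_homology_rep : fix_trace homology_rep = 0.
Proof.
rewrite /fix_trace /coxeter /gen /homology_rep !inordK // !exprS expr0 !mulr1.
rewrite -!mx_of_int_mul -mx_of_int_id -!mx_of_int_add (_ : imx_add _ _ _ = imx_zero 4).
  by rewrite mx_of_int_zero mxtrace0.
by vm_compute.
Qed.

End HomologyRepresentation.

Theorem mainTheorem12 (R : realType) :
  exists rho : 'I_5 -> 'M[R]_4,
    is_hom_Gamma2 (@Sp4 R) rho /\
    forall rho' : 'I_5 -> 'M[R]_4, is_hom_Gamma2 (@U2 R) rho' ->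
      ~ same_path_component (is_hom_Gamma2 (@Sp4 R)) rho' rho.
Proof.
exists (homology_rep R); split; first exact: homology_rep_hom.
move=> rho' rho'_hom [g [g0 g1 g_hom g_cont]].
have := @fix_trace_path_eq0 R _ _ g_hom g_cont.
rewrite g0 g1 fix_trace_homology_rep (fix_trace_U2 _ rho'_hom) => /(_ erefl)/eqP.
by rewrite pnatr_eq0.
Qed.
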